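(* Let $\mathscr{H}_2$ be the class of graphs $G$ on at least twelve vertices with $\gamma(G)=2$ and $\operatorname{diam}(\overline{G})=2$. Then $\mathscr{H}_2$ is recognizable: every graph $H$ with $\mathscr{D}(H)=\mathscr{D}(G)$ for some $G\in\mathscr{H}_2$ belongs to $\mathscr{H}_2$.
   Context: All graphs are finite, simple and undirected; $\overline{G}$ is the complement, $\operatorname{diam}$ the diameter and $\gamma$ the domination number. For a vertex $v$, the card $G-v$ is the unlabeled graph obtained by deleting $v$; the deck $\mathscr{D}(G)$ is the multiset of all cards up to isomorphism. A class of graphs is recognizable if every reconstruction (graph with the same deck) of a member of the class is again a member. *)

From mathcomp Require Import all_boot.
Set Implicit Arguments. Unset Strict Implicit. Unset Printing Implicit Defensive.

(* A (finite, simple, undirected) graph is a finType V with an adjacency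
   relation e : rel V; simplicity (symmetry, irreflexivity) is assumed
   explicitly where needed. *)
Definition simple_graph (V : finType) (e : rel V) : Prop :=
  symmetric e /\ irreflexive e.

Definition compl (V : finType) (e : rel V) : rel V :=
  [rel x y | (x != y) && ~~ e x y].

Definition giso (A B : finType) (ea : rel A) (eb : rel B) : Prop :=
  exists g : A -> B, bijective g /\ forall x y, ea x y = eb (g x) (g y).

Definition card_of (V : finType) (e : rel V) (v : V) : rel {x : V | x != v} :=
  fun x y => e (val x) (val y).
Arguments card_of {V} e v.

(* equality of decks: a bijection between vertex sets matching every card
   with an isomorphic card (= equality of multisets of cards up to iso) *)
Definition same_deck (V W : finType) (e : rel V) (f : rel W) : Prop :=
  exists s : V -> W, bijective s /\ forall v, giso (card_of e v) (card_of f (s v)).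

Definition dominating (V : finType) (e : rel V) (D : {set V}) : bool :=
  [forall x, (x \in D) || [exists y in D, e x y]].

(* domination number: least size of a dominating set (setT always dominates) *)
Definition dom_num (V : finType) (e : rel V) : nat :=
  #|[arg min_(D < [set: V] | dominating e D) #|D| ]|.

Fixpoint ball (V : finType) (e : rel V) (k : nat) (x : V) : {set V} :=
  match k with
  | 0 => [set x]
  | k'.+1 => ball e k' x :|: [set y | [exists z in ball e k' x, e z y]]
  end.

(* distance (meaningful when y is reachable from x; all finite distances
   are < #|V|) *)
Definition dist (V : finType) (e : rel V) (x y : V) : nat :=
  find (fun k => y \in ball e k x) (iota 0 #|V|.+1).

Definition connectedb (V : finType) (e : rel V) : bool :=
  [forall x, forall y, y \in ball e #|V| x].

(* diameter: None = infinite (disconnected graph) *)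
Definition diam (V : finType) (e : rel V) : option nat :=
  if connectedb e then Some (\max_(x : V) \max_(y : V) dist e x y) else None.

Definition in_H2 (V : finType) (e : rel V) : Prop :=
  12 <= #|V| /\ dom_num e = 2 /\ diam (compl e) = Some 2.

(* For distinct vertices p, q let u(p, q) ([nundom]) count the other vertices
   adjacent to neither, and let N_b(k) ([npairs b k]) count the ordered pairs
   with adjacency b and u(p, q) = k.  For a symmetric relation on at least twelve vertices,
   membership in H_2 says exactly that N_true(0) = 0 < N_false(0): the
   diameter condition on the complement says that every edge has a common
   non-neighbour, and γ = 2 then forces a non-adjacent dominating pair.

   Deleting a vertex w outside {p, q} lowers u(p, q) by one when w is
   undominated and keeps it otherwise, whence Kelly's identity
     Σ_w N_b^{G-w}(k) = (k+1) N_b(k+1) + (n-2-k) N_b(k).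
   The deck therefore determines N_b(0) as soon as it determines N_b(n-2).
   Suppose N_b(0) > 0 for G but N_b(0) = 0 for H.  A dominating pair and an
   isolated pair (u = n-2) never have the same adjacency, so N_b(n-2) = 0 for
   G, and N_b(n-2) > 0 for H since the tops must differ.  Every card H - w
   with w off an isolated pair still has one, giving at least n-2 such cards,
   while only the two cards of G that delete a vertex of its dominating pair
   can have one: a contradiction for n >= 5. *)

From mathcomp Require Import all_boot zify.
Set Implicit Arguments. Unset Strict Implicit. Unset Printing Implicit Defensive.

(** * Undominated vertices of a pair *)

Lemma sum_neq2 (T : finType) (p q : T) :
  p != q -> \sum_(z | (z != p) && (z != q)) 1 = #|T| - 2.
Proof.
move=> pq; rewrite sum1dep_card.
have -> : [set z | (z != p) && (z != q)] = [set~ p] :\ q.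
  by apply/setP => z; rewrite !inE andbC.
by move: (cardsD1 q [set~ p]); rewrite cardsC1 !inE eq_sym pq; lia.
Qed.

Lemma exists_neq2 (T : finType) (p q : T) : 2 < #|T| -> exists z, (z != p) && (z != q).
Proof.
move=> n3; apply/existsP; apply: contraLR n3; rewrite negb_exists => /forallP nz.
rewrite -leqNgt -cardsT (@leq_trans #|[set p; q]|) //; last by rewrite cards2; case: (p != q).
apply: subset_leq_card; apply/subsetP => z _; move: (nz z); rewrite !inE negb_and !negbK.
by case/orP=> ->; rewrite ?orbT.
Qed.

Section Undominated.
Variables (T : finType) (r : rel T).

Definition undom (p q z : T) : bool := [&& z != p, z != q, ~~ r p z & ~~ r q z].

Definition nundom (p q : T) : nat := \sum_z undom p q z.

Definition npairs (b : bool) (k : nat) : nat :=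
  \sum_p \sum_q ((p != q) && (r p q == b)) * (nundom p q == k).

Lemma npairs_gt0P b k :
  reflect (exists p q, [/\ p != q, r p q = b & nundom p q = k]) (0 < npairs b k).
Proof.
apply: (iffP idP) => [|[p [q [pq rpq upq]]]].
  rewrite lt0n sum_nat_eq0 => /forallPn[p]; rewrite sum_nat_eq0 => /forallPn[q] /=.
  case: (boolP ((p != q) && (r p q == b))) => [/andP[pq /eqP rpq]|]; last by rewrite mul0n.
  by rewrite mul1n eqb0 negbK => /eqP upq; exists p, q.
rewrite lt0n sum_nat_eq0; apply/forallPn; exists p; rewrite sum_nat_eq0.
by apply/forallPn; exists q; rewrite /= pq rpq upq !eqxx.
Qed.

Lemma nundom_eq0P p q :
  reflect (forall z, z != p -> z != q -> r p z || r q z) (nundom p q == 0).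
Proof.
rewrite sum_nat_eq0; apply: (iffP forallP) => [H z zp zq | H z].
  by move: (H z); rewrite /undom zp zq eqb0 /= negb_and !negbK.
rewrite eqb0; apply/negP => /and4P[zp zq npz nqz].
by move: (H z zp zq); rewrite (negbTE npz) (negbTE nqz).
Qed.

Lemma nundom_off p q : nundom p q = \sum_(z | (z != p) && (z != q)) undom p q z.
Proof.
rewrite /nundom (bigID (fun z => (z != p) && (z != q))) /= [X in _ + X]big1 ?addn0 //.
by move=> z; rewrite negb_and !negbK /undom => /orP[] /eqP->; rewrite eqxx ?andbF.
Qed.

Lemma nundom_split p q : p != q ->
  nundom p q + \sum_(z | (z != p) && (z != q)) ~~ undom p q z = #|T| - 2.
Proof.
move=> pq; rewrite -(sum_neq2 pq) nundom_off -big_split.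
by apply: eq_bigr => z _; case: (undom p q z).
Qed.

Lemma nundom_fullP p q : p != q ->
  reflect (forall z, z != p -> z != q -> ~~ r p z && ~~ r q z) (nundom p q == #|T| - 2).
Proof.
move=> pq; rewrite -(nundom_split pq) -{1}[nundom p q]addn0 eqn_add2l eq_sym sum_nat_eq0.
apply: (iffP forallP) => [H z zp zq | H z].
  by move: (H z); rewrite zp zq eqb0 negbK /undom zp zq.
by apply/implyP => /andP[zp zq]; rewrite eqb0 negbK /undom zp zq H.
Qed.

Lemma npairs0_edge b : 2 < #|T| -> 0 < npairs b 0 -> exists x y, x != y /\ r x y.
Proof.
move=> n3 /npairs_gt0P[p [q [pq _ /eqP/nundom_eq0P dom]]].
have [z /andP[zp zq]] := exists_neq2 p q n3.
by case/orP: (dom z zp zq) => rz; [exists p, z | exists q, z]; rewrite eq_sym.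
Qed.

Hypothesis r_sym : symmetric r.

Lemma dominating_isolated_neq p q a c : 2 < #|T| -> p != q -> a != c ->
  nundom p q = 0 -> nundom a c = #|T| - 2 -> r p q != r a c.
Proof.
move=> n3 pq ac /eqP/nundom_eq0P dom /eqP/(nundom_fullP ac) iso.
wlog /andP[pa pc] : p q pq dom / (p != a) && (p != c).
  move=> gen; case: (boolP ((p != a) && (p != c))) => [|pac]; first exact: gen.
  case: (boolP ((q != a) && (q != c))) => [qac|qac].
    rewrite r_sym; apply: gen qac; first by rewrite eq_sym.
    by move=> z zq zp; rewrite orbC dom.
  have [z /andP[za zc]] := exists_neq2 a c n3.
  move: pac qac dom (iso z za zc); rewrite !negb_and !negbK.
  by case/orP=> /eqP-> /orP[] /eqP-> /(_ z); rewrite ?za ?zc => /(_ isT isT);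
    case: (r a z); case: (r c z).
have /andP[nap ncp] := iso p pa pc.
wlog /eqP qa : a c ac iso nap ncp pa pc / q == a.
  move=> gen; case: (eqVneq q a) => [/eqP|qa]; first exact: gen.
  case: (eqVneq q c) => [/eqP qc|qc].
    rewrite (r_sym a); apply: (gen c a) => //; first by rewrite eq_sym.
    by move=> z zc za; rewrite andbC iso.
  move: (dom a) (iso q); rewrite eq_sym pa eq_sym qa qc (r_sym p) (negbTE nap) (r_sym q).
  by move=> /(_ isT isT) /= -> /(_ isT isT).
subst q; move: (dom c); rewrite eq_sym pc eq_sym ac (r_sym p c) (negbTE ncp).
by move=> /(_ isT isT) /= ->; rewrite (r_sym p) (negbTE nap).
Qed.

Lemma npairs_top_eq0 b : 2 < #|T| -> 0 < npairs b 0 -> npairs b (#|T| - 2) = 0.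
Proof.
move=> n3 /npairs_gt0P[p [q [pq rpq dom]]]; apply/eqP; rewrite -leqn0 leqNgt.
apply/npairs_gt0P => -[a [c [ac rac iso]]].
by move: (dominating_isolated_neq n3 pq ac dom iso); rewrite rpq rac eqxx.
Qed.

End Undominated.

(** * Membership in H_2 *)

Section Domination.
Variables (T : finType) (e : rel T).
Hypothesis e_sym : symmetric e.

Lemma dominatingS (D D' : {set T}) : D \subset D' -> dominating e D -> dominating e D'.
Proof.
move=> /subsetP sDD' /forallP dom; apply/forallP => x.
case/orP: (dom x) => [/sDD' -> // | /existsP[y /andP[yD exy]]].
by apply/orP; right; apply/existsP; exists y; rewrite sDD'.
Qed.

Lemma dominating_setT : dominating e setT.
Proof. by apply/forallP => x; rewrite inE. Qed.

Lemma dom_num_min (D : {set T}) : dominating e D -> dom_num e <= #|D|.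
Proof.
move=> domD; rewrite /dom_num; case: arg_minnP => [|D' _ minD']; last exact: minD'.
exact: dominating_setT.
Qed.

Lemma dom_num_witness : exists2 D, dominating e D & #|D| = dom_num e.
Proof.
by rewrite /dom_num; case: arg_minnP => [|D domD _]; [exact: dominating_setT | exists D].
Qed.

Lemma dominating2E p q : dominating e [set p; q] = (nundom e p q == 0).
Proof.
apply/forallP/nundom_eq0P => [dom z zp zq | dom z].
  move: (dom z); rewrite !inE (negbTE zp) (negbTE zq) /= => /existsP[y].
  by rewrite !inE => /andP[/orP[]/eqP-> ezy]; rewrite [e p z]e_sym [e q z]e_sym ezy ?orbT.
rewrite !inE; case: (eqVneq z p) => //= zp; case: (eqVneq z q) => //= zq.
apply/existsP; case/orP: (dom z zp zq) => ez; [exists p | exists q];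
  by rewrite !inE eqxx ?orbT e_sym.
Qed.

Lemma dominating1_npairs w y : y != w -> dominating e [set w] -> 0 < npairs e true 0.
Proof.
move=> yw domw; apply/npairs_gt0P; exists w, y; split; first by rewrite eq_sym.
  move/forallP: domw => /(_ y); rewrite inE (negbTE yw) /= => /existsP[z].
  by rewrite inE => /andP[/eqP-> eyw]; rewrite e_sym.
apply/eqP; rewrite -dominating2E; apply: dominatingS domw.
by rewrite sub1set !inE eqxx.
Qed.

Lemma dom_num_eq2 : 2 < #|T| -> npairs e true 0 = 0 ->
  (dom_num e = 2 <-> 0 < npairs e false 0).
Proof.
move=> n3 edge_undom; split.
  have [D domD <-] := dom_num_witness => /eqP/cards2P[p [q [pq defD]]].
  have dom_pq : nundom e p q = 0 by apply/eqP; rewrite -dominating2E -defD.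
  apply/npairs_gt0P; exists p, q; split=> //; apply: negbTE; apply/negP => epq.
  have : 0 < npairs e true 0 by apply/npairs_gt0P; exists p, q.
  by rewrite edge_undom.
case/npairs_gt0P => p [q [pq _ /eqP]]; rewrite -dominating2E => /dom_num_min.
rewrite cards2 pq => le2; apply/eqP; rewrite eqn_leq le2 /=.
have [D domD <-] := dom_num_witness; rewrite ltnNge; apply/negP => le1.
have [w sDw] : exists w, D \subset [set w].
  move: le1; rewrite leq_eqVlt ltnS leqn0 => /orP[/cards1P[w ->] | /eqP/cards0_eq ->].
    by exists w.
  by exists p; rewrite sub0set.
have [y /andP[yw _]] := exists_neq2 w w n3.
by have := dominating1_npairs yw (dominatingS sDw domD); rewrite edge_undom.
Qed.

End Domination.

Section Balls.
Variables (T : finType) (r : rel T).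

Lemma ball_subset k m x : k <= m -> ball r k x \subset ball r m x.
Proof.
elim: m => [|m IH]; first by rewrite leqn0 => /eqP->.
rewrite leq_eqVlt => /orP[/eqP-> // | /IH sub].
exact: subset_trans sub (subsetUl _ _).
Qed.

Lemma ball1E x y : (y \in ball r 1 x) = (y == x) || r x y.
Proof.
rewrite /= !inE; case: (eqVneq y x) => [->|_] //=.
by apply/existsP/idP => [[z /andP[]]|rxy]; [rewrite inE => /eqP-> | exists x; rewrite inE eqxx].
Qed.

Lemma ball2P x y :
  reflect [\/ y = x, r x y | exists z, r x z && r z y] (y \in ball r 2 x).
Proof.
have -> : ball r 2 x = ball r 1 x :|: [set y | [exists z in ball r 1 x, r z y]] by [].
rewrite in_setU ball1E in_set; apply: (iffP idP).
  case/orP=> [/orP[/eqP-> | rxy] | /existsP[z /andP[]]]; [exact: Or31 | exact: Or32 |].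
  by rewrite ball1E => /orP[/eqP-> rxy | rxz rzy]; [apply: Or32 | apply: Or33; exists z; rewrite rxz].
case=> [-> | -> | [z /andP[rxz rzy]]]; rewrite ?eqxx ?orbT //.
by apply/orP; right; apply/existsP; exists z; rewrite ball1E rxz orbT.
Qed.

Lemma dist_ball x y : connectedb r -> y \in ball r (dist r x y) x.
Proof.
move=> /forallP /(_ x) /forallP /(_ y) yx.
have hs : has (fun k => y \in ball r k x) (iota 0 #|T|.+1).
  by apply/hasP; exists #|T|; rewrite // mem_iota add0n ltnS leqnn.
by move: (nth_find 0 hs); rewrite nth_iota // -[X in _ < X](size_iota 0) -has_find.
Qed.

Lemma dist_le x y k : y \in ball r k x -> k <= #|T| -> dist r x y <= k.
Proof.
move=> yx kn; rewrite leqNgt; apply/negP => /(before_find 0).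
by rewrite nth_iota ?add0n ?yx // ltnS.
Qed.

Lemma diam_ball k x y : diam r = Some k -> y \in ball r k x.
Proof.
rewrite /diam; case: ifP => // conn [<-].
apply: subsetP (dist_ball x y conn); apply: ball_subset.
by apply: leq_trans (leq_bigmax x); exact: (leq_bigmax (F := dist r x) y).
Qed.

Lemma diam_eq k : k <= #|T| -> (forall x y, y \in ball r k x) ->
  (exists x y, y \notin ball r k.-1 x) -> diam r = Some k.
Proof.
move=> kn ballk [x0 [y0 far]].
have conn : connectedb r.
  by apply/forallP => x; apply/forallP => y; apply: subsetP (ballk x y); exact: ball_subset.
rewrite /diam conn; congr Some; apply/eqP; rewrite eqn_leq; apply/andP; split.
  by apply/bigmax_leqP => x _; apply/bigmax_leqP => y _; exact: dist_le.
apply: leq_trans (leq_bigmax x0); apply: leq_trans (leq_bigmax (F := dist r x0) y0).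
rewrite leqNgt; apply: contra far => lt_k; apply: subsetP (dist_ball x0 y0 conn).
by apply: ball_subset; rewrite -ltnS; case: k {kn ballk} lt_k.
Qed.

End Balls.

Section Complement.
Variables (T : finType) (e : rel T).
Hypothesis e_sym : symmetric e.

Lemma compl_ball2 x y : x != y -> e x y ->
  (y \in ball (compl e) 2 x) = (nundom e x y != 0).
Proof.
move=> xy exy; apply/ball2P/idP => [[yx | cxy | [z /andP[cxz czy]]] | undom_xy].
- by rewrite yx eqxx in xy.
- by move: cxy; rewrite /compl /= exy andbF.
- apply/negP => /nundom_eq0P dom; move: cxz czy; rewrite /compl /= => /andP[xz nxz] /andP[zy nzy].
  by move: (dom z); rewrite (eq_sym z) xz zy (negbTE nxz) e_sym (negbTE nzy) => /(_ isT isT).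
apply: Or33; apply/existsP; move: undom_xy; apply: contraTT.
rewrite negb_exists negbK => /forallP nball; apply/nundom_eq0P => z zx zy.
apply: contraR (nball z); rewrite negb_or => /andP[nxz nyz].
by rewrite /compl /= eq_sym zx nxz zy e_sym nyz.
Qed.

Lemma ball2_compl_npairs :
  (forall x y, y \in ball (compl e) 2 x) <-> npairs e true 0 = 0.
Proof.
split=> [ball2 | edge_undom x y].
  apply/eqP; rewrite -leqn0 leqNgt; apply/npairs_gt0P => -[x [y [xy exy /eqP undom0]]].
  by move: (ball2 x y); rewrite compl_ball2 // undom0.
have [-> | yx] := eqVneq y x; first by apply/ball2P; apply: Or31.
case exy: (e x y); last by apply/ball2P; apply: Or32; rewrite /compl /= eq_sym yx exy.
rewrite compl_ball2 // 1?eq_sym //; apply/eqP => undom0.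
have : 0 < npairs e true 0 by apply/npairs_gt0P; exists x, y; rewrite eq_sym.
by rewrite edge_undom.
Qed.

End Complement.

Lemma in_H2E (V : finType) (e : rel V) : symmetric e ->
  in_H2 e <-> [/\ 12 <= #|V|, npairs e true 0 = 0 & 0 < npairs e false 0].
Proof.
move=> e_sym; split=> [[n12 [dom2 diam2]] | [n12 edge_undom nonedge_dom]].
  have edge_undom : npairs e true 0 = 0.
    by apply/(ball2_compl_npairs e_sym) => x y; exact: diam_ball diam2.
  by split=> //; apply/(dom_num_eq2 e_sym _ edge_undom) => //; lia.
have n3 : 2 < #|V| by lia.
split=> //; split; first exact/(dom_num_eq2 e_sym n3 edge_undom).
apply: diam_eq; [lia | exact/(ball2_compl_npairs e_sym) |].
have [x [y [xy exy]]] := npairs0_edge n3 nonedge_dom.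
by exists x, y; rewrite ball1E /compl /= exy andbF orbF eq_sym.
Qed.

(** * Kelly's lemma for [npairs] *)

Lemma exchange_sum_off (T : finType) (F : T -> T -> T -> nat) :
  \sum_w \sum_(p | p != w) \sum_(q | q != w) F w p q =
  \sum_p \sum_q \sum_(w | (w != p) && (w != q)) F w p q.
Proof.
rewrite (exchange_big_dep xpredT) //; apply: eq_bigr => p _.
rewrite (exchange_big_dep xpredT) //; apply: eq_bigr => q _.
by apply: eq_bigl => w; rewrite /= !(eq_sym w).
Qed.

Lemma sum_sig_neq (T : finType) (w : T) (F : T -> nat) :
  \sum_(z : {x | x != w}) F (val z) = \sum_(z | z != w) F z.
Proof. exact: esym (big_sub (fun x => x != w) F). Qed.

Lemma count_shift c k m :
  (c.-1 == k) * c + (c == k) * m = (c == k.+1) * k.+1 + (c == k) * (c + m - k).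
Proof.
case: c => [|c] /=; first by case: k => [|k] //=; rewrite subn0.
rewrite eqSS; case: (eqVneq c k) => [->|ck]; first by rewrite (gtn_eqF (ltnSn k)) /= addn0.
by case: (eqVneq c.+1 k) => [<-|]; rewrite ?addKn.
Qed.

Section Cards.
Variables (T : finType) (r : rel T).

Lemma nundom_card_of w (p q : {x | x != w}) :
  nundom (card_of r w) p q = nundom r (val p) (val q) - undom r (val p) (val q) w.
Proof.
rewrite [in RHS]/nundom (bigD1 w) //= addKn -sum_sig_neq; apply: eq_bigr => z _.
by rewrite /undom /card_of !(inj_eq val_inj).
Qed.

Lemma npairs_card_of w b k : npairs (card_of r w) b k =
  \sum_(p | p != w) \sum_(q | q != w)
    ((p != q) && (r p q == b)) * (nundom r p q - undom r p q w == k).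
Proof.
rewrite /npairs -sum_sig_neq; apply: eq_bigr => p _; rewrite -sum_sig_neq.
by apply: eq_bigr => q _; rewrite nundom_card_of (inj_eq val_inj).
Qed.

Lemma count_deleted p q k : p != q ->
  \sum_(w | (w != p) && (w != q)) (nundom r p q - undom r p q w == k) =
  (nundom r p q == k.+1) * k.+1 + (nundom r p q == k) * (#|T| - 2 - k).
Proof.
move=> pq; have split_n := nundom_split r pq; set c := nundom r p q in split_n *.
have -> : \sum_(w | (w != p) && (w != q)) (c - undom r p q w == k) =
    (c.-1 == k) * \sum_(w | (w != p) && (w != q)) undom r p q w +
    (c == k) * \sum_(w | (w != p) && (w != q)) ~~ undom r p q w.
  rewrite !big_distrr -big_split; apply: eq_bigr => w _ /=.
  by case: (undom r p q w); rewrite ?subn1 ?subn0 /= ?muln0 ?muln1 ?addn0.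
by rewrite -nundom_off -/c -split_n count_shift.
Qed.

Lemma sum_npairs_card_of b k :
  \sum_w npairs (card_of r w) b k = k.+1 * npairs r b k.+1 + (#|T| - 2 - k) * npairs r b k.
Proof.
under eq_bigr => w _ do rewrite npairs_card_of.
rewrite exchange_sum_off /npairs !big_distrr -big_split; apply: eq_bigr => p _.
rewrite !big_distrr -big_split; apply: eq_bigr => q _ /=.
rewrite -big_distrr /=; case: (boolP (p != q)) => [pq|]; last by rewrite !mul0n !muln0.
rewrite count_deleted //; case: (r p q == b); rewrite /= ?mul0n ?muln0 // !mul1n.
by rewrite mulnC [_ * (_ - _)]mulnC.
Qed.

End Cards.

(** * Comparing decks *)

Lemma recurrence_top_bottom (a b : nat -> nat) m :
  (forall k, k.+1 * a k.+1 + (m - k) * a k = k.+1 * b k.+1 + (m - k) * b k) ->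
  a m = b m -> a 0 = b 0.
Proof.
move=> rec top; suff eq_down d : d <= m -> a (m - d) = b (m - d).
  by rewrite -(subnn m); apply: eq_down.
elim: d => [|d IH] dm; first by rewrite subn0.
have := rec (m - d.+1); rewrite -subSn // subSS subKn // IH 1?ltnW //.
by move/addnI/eqP; rewrite eqn_pmul2l // => /eqP.
Qed.

Lemma giso_sym (A B : finType) (ea : rel A) (eb : rel B) : giso ea eb -> giso eb ea.
Proof.
case=> g [[g' gK g'K] hg]; exists g'; split; first by exists g.
by move=> x y; rewrite hg !g'K.
Qed.

Lemma same_deck_sym (U V : finType) (e : rel U) (f : rel V) :
  same_deck e f -> same_deck f e.
Proof.
case=> s [[s' sK s'K] hs]; exists s'; split; first by exists s.
by move=> w; apply: giso_sym; have := hs (s' w); rewrite s'K.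
Qed.

Lemma npairs_giso (A B : finType) (ea : rel A) (eb : rel B) b k :
  giso ea eb -> npairs ea b k = npairs eb b k.
Proof.
case=> g [bg hg]; have ginj := bij_inj bg.
have nundom_g p q : nundom eb (g p) (g q) = nundom ea p q.
  rewrite /nundom (reindex g) /=; last exact: onW_bij.
  by apply: eq_bigr => z _; rewrite /undom !(inj_eq ginj) -!hg.
rewrite /npairs (reindex g) /=; last exact: onW_bij.
apply: eq_bigr => p _; rewrite (reindex g) /=; last exact: onW_bij.
by apply: eq_bigr => q _; rewrite nundom_g (inj_eq ginj) hg.
Qed.

Lemma card_of_npairs_gt0 (T : finType) (r : rel T) w p q b : p != q -> r p q = b ->
  w != p -> w != q -> 0 < npairs (card_of r w) b (nundom r p q - undom r p q w).
Proof.
move=> pq rpq wp wq; apply/npairs_gt0P.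
have pw : p != w by rewrite eq_sym.
have qw : q != w by rewrite eq_sym.
by exists (exist _ p pw), (exist _ q qw); split => //; exact: nundom_card_of.
Qed.

Lemma card_card_of (T : finType) (w : T) : #|{: {x : T | x != w}}| = #|T|.-1.
Proof. by rewrite card_sig cardC1. Qed.

Lemma cards_isolated_pair (T : finType) (r : rel T) b : 0 < npairs r b (#|T| - 2) ->
  #|T| - 2 <= \sum_w (0 < npairs (card_of r w) b (#|T| - 3)).
Proof.
case/npairs_gt0P => a [c [ac rac full]].
have /eqP/(nundom_fullP r ac) iso := full.
rewrite -(sum_neq2 ac) [X in _ <= X](bigID (fun w => (w != a) && (w != c))) /=.
apply: (leq_trans _ (leq_addr _ _)); apply: leq_sum => w /andP[wa wc].
have := card_of_npairs_gt0 ac rac wa wc.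
by rewrite full /undom wa wc iso //= subn1 -subnS => ->.
Qed.

Lemma cards_dominating_pair (T : finType) (r : rel T) b : symmetric r -> 3 < #|T| ->
  0 < npairs r b 0 -> \sum_w (0 < npairs (card_of r w) b (#|T| - 3)) <= 2.
Proof.
move=> r_sym n4 /npairs_gt0P[x [y [xy rxy dom]]].
rewrite (bigID (mem [set x; y])) /= [X in _ + X]big1 ?addn0.
  apply: leq_trans (_ : \sum_(w in [set x; y]) 1 <= 2).
    by apply: leq_sum => w _; exact: leq_b1.
  by rewrite sum1_card cards2; case: (x != y).
move=> w; rewrite !inE negb_or => /andP[wx wy].
have := card_of_npairs_gt0 xy rxy wx wy; rewrite dom sub0n => dom_w.
have -> : #|T| - 3 = #|{: {x : T | x != w}}| - 2 by rewrite card_card_of; lia.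
apply/eqP; rewrite eqb0 -eqn0Ngt; apply/eqP; apply: npairs_top_eq0 dom_w.
  by move=> u v; exact: r_sym.
by rewrite card_card_of; lia.
Qed.

Section Deck.
Variables (U V : finType) (r1 : rel U) (r2 : rel V).
Hypothesis deck : same_deck r1 r2.

Lemma card_deck : #|U| = #|V|.
Proof. by case: deck => s [bs _]; rewrite (bij_eq_card bs). Qed.

Lemma sum_deck_npairs (F : nat -> nat) b k :
  \sum_w F (npairs (card_of r1 w) b k) = \sum_w F (npairs (card_of r2 w) b k).
Proof.
case: deck => s [bs hs]; rewrite [RHS](reindex s) /=; last exact: onW_bij.
by apply: eq_bigr => w _; rewrite (npairs_giso _ _ (hs w)).
Qed.

Lemma deck_npairs0 b :
  npairs r1 b (#|U| - 2) = npairs r2 b (#|U| - 2) -> npairs r1 b 0 = npairs r2 b 0.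
Proof.
apply: recurrence_top_bottom => k.
by rewrite -sum_npairs_card_of card_deck -sum_npairs_card_of (sum_deck_npairs id).
Qed.

Lemma deck_npairs0_gt0 b : symmetric r1 -> 4 < #|U| ->
  0 < npairs r1 b 0 -> 0 < npairs r2 b 0.
Proof.
move=> r1_sym n5 dom1; rewrite lt0n; apply/eqP => none2.
have top1 := npairs_top_eq0 r1_sym (ltnW (ltnW n5)) dom1.
have top2 : 0 < npairs r2 b (#|V| - 2).
  rewrite lt0n -card_deck; apply/eqP => top2.
  by move: dom1; rewrite (deck_npairs0 (etrans top1 (esym top2))) none2.
have := cards_dominating_pair r1_sym (ltnW n5) dom1.
rewrite (sum_deck_npairs (fun m => 0 < m : nat)) card_deck.
by have := cards_isolated_pair top2; rewrite -card_deck; lia.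
Qed.

End Deck.

Theorem lemma10 (V W : finType) (e : rel V) (f : rel W) :
  simple_graph e -> simple_graph f ->
  in_H2 e -> same_deck e f -> in_H2 f.
Proof.
move=> [e_sym _] [f_sym _] /(in_H2E e_sym)[nV e_edge e_nonedge] deck.
have nW : 12 <= #|W| by rewrite -(card_deck deck).
apply/(in_H2E f_sym); split=> //.
- apply/eqP; rewrite -leqn0 leqNgt; apply/negP => f_edge.
  have nW5 : 4 < #|W| by apply: leq_trans nW.
  by have := deck_npairs0_gt0 (same_deck_sym deck) f_sym nW5 f_edge; rewrite e_edge.
- have nV5 : 4 < #|V| by apply: leq_trans nV.
  exact: (deck_npairs0_gt0 deck e_sym nV5 e_nonedge).
Qed.
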